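(* Let $q$ be a prime power, $n=q^4-1$, and let $I_x=\{x,y\}$ be a cyclotomic coset of cardinality $2$ whose minimal representative is $x=(a_0,a_1,a_2,a_3)$. Then $qx>qy$ if and only if $a_2>a_0$, or $a_2=a_0$ and $a_1>a_3$; and $qx<qy$ if and only if $a_2<a_0$, or $a_2=a_0$ and $a_1<a_3$ (where $qx,qy$ are reduced modulo $n$ into $\{0,\ldots,n-1\}$).
   Context: Identify $\mathbb{Z}_n$ with $\{0,\ldots,n-1\}$. The $q$-adic 4-tuple $(a_0,a_1,a_2,a_3)$ denotes $a_0+a_1q+a_2q^2+a_3q^3$ with $0\le a_i<q$. The cyclotomic coset of $x$ with respect to $q^2$ is $I_x=\{x,\,q^2x\bmod n\}$; its minimal representative is its least element. *)

From mathcomp Require Import all_boot.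
Set Implicit Arguments. Unset Strict Implicit. Unset Printing Implicit Defensive.

Definition prime_power (q : nat) : Prop :=
  exists p k, prime p /\ 0 < k /\ q = p ^ k.

(* Z_n identified with {0,...,n-1}; cyclotomic coset of x w.r.t. q^2 *)
Definition cyc_coset (n q x : nat) : seq nat := undup [:: x; (q ^ 2 * x) %% n].

From mathcomp Require Import all_boot zify.

Set Implicit Arguments.
Unset Strict Implicit.
Unset Printing Implicit Defensive.

(* Multiplication by [q] modulo [q^4 - 1] rotates base-[q] digits: for
   x = a + q b + q^2 c + q^3 d < q^4 - 1 we have
   q x = d (q^4 - 1) + (d + q a + q^2 b + q^3 c).  Hence [q x], [y = q^2 x] and
   [q y] have digits (a3,a0,a1,a2), (a2,a3,a0,a1) and (a1,a2,a3,a0), so [q x]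
   and [q y] differ by swapping their two halves of digits, and comparing them
   lexicographically from the top digit compares a2 with a0, then a1 with a3. *)

Definition qadic4 (q a b c d : nat) : nat := a + q * (b + q * (c + q * d)).

Section Qadic.

Variable q : nat.

Lemma ltn_qadic_mul (a B M : nat) : a < q -> B < M -> a + q * B < q * M.
Proof.
move=> lt_aq lt_BM; apply: leq_trans (_ : _ < q * B.+1) _.
  by rewrite mulnS ltn_add2r.
by rewrite leq_mul2l lt_BM orbT.
Qed.

Lemma ltn_qadic_lex (a a' B B' : nat) : a < q -> a' < q ->
  (a + q * B < a' + q * B') = (B < B') || (B == B') && (a < a').
Proof.
move=> lt_aq lt_a'q; case: (ltngtP B B') => [lt_BB'|lt_B'B|->] /=; last by rewrite ltn_add2r.
- by rewrite (leq_trans (ltn_qadic_mul lt_aq lt_BB')) ?leq_addl.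
- by apply/negbTE; rewrite -leqNgt ltnW // (leq_trans (ltn_qadic_mul lt_a'q lt_B'B)) ?leq_addl.
Qed.

Lemma eqn_qadic (a a' B B' : nat) : a < q -> a' < q ->
  (a + q * B == a' + q * B') = (B == B') && (a == a').
Proof.
move=> lt_aq lt_a'q; apply/eqP/andP => [eq_aB|[/eqP-> /eqP->] //].
have := ltn_qadic_lex B B' lt_aq lt_a'q; have := ltn_qadic_lex B' B lt_a'q lt_aq.
by rewrite eq_aB ltnn; case: (ltngtP B B') => //= eq_BB'; lia.
Qed.

Lemma ltn_qadic4_lex (a b c d a' b' c' d' : nat) :
  a < q -> b < q -> c < q -> d < q -> a' < q -> b' < q -> c' < q -> d' < q ->
  (qadic4 q a b c d < qadic4 q a' b' c' d') =
  [|| d < d', (d == d') && (c < c'), [&& d == d', c == c' & b < b']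
    | [&& d == d', c == c', b == b' & a < a']].
Proof.
by move=> *; rewrite /qadic4 !ltn_qadic_lex // !eqn_qadic // !orbA !andbA.
Qed.

Lemma eqn_qadic4 (a b c d a' b' c' d' : nat) :
  a < q -> b < q -> c < q -> d < q -> a' < q -> b' < q -> c' < q -> d' < q ->
  (qadic4 q a b c d == qadic4 q a' b' c' d') = [&& d == d', c == c', b == b' & a == a'].
Proof. by move=> *; rewrite /qadic4 !eqn_qadic // !andbA. Qed.

Lemma ltn_qadic4_swap_halves (u v w z : nat) :
  u < q -> v < q -> w < q -> z < q ->
  (qadic4 q u v w z < qadic4 q w z u v) = (z < v) || (z == v) && (w < u).
Proof.
move=> *; rewrite ltn_qadic4_lex //.
by case: (ltngtP z v) => //= _; case: (ltngtP w u).
Qed.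

Lemma qadic4_lt_expn4 (a b c d : nat) :
  a < q -> b < q -> c < q -> d < q -> qadic4 q a b c d < q ^ 4.
Proof.
by move=> *; rewrite /qadic4 !expnS expn0 muln1; do 3!(apply: ltn_qadic_mul => //).
Qed.

Lemma qadic4_max : 0 < q -> qadic4 q q.-1 q.-1 q.-1 q.-1 = q ^ 4 - 1.
Proof. by case: q => // p _; rewrite /qadic4 /= !expnS expn0; nia. Qed.

Lemma mulq_qadic4_mod (a b c d : nat) : a < q -> b < q -> c < q -> d < q ->
  qadic4 q a b c d < q ^ 4 - 1 ->
  (q * qadic4 q a b c d) %% (q ^ 4 - 1) = qadic4 q d a b c.
Proof.
move=> lt_aq lt_bq lt_cq lt_dq lt_xn.
have q_gt0 : 0 < q by case: q lt_aq.
have q4_gt0 : 0 < q ^ 4 by rewrite expn_gt0 q_gt0.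
have -> : q * qadic4 q a b c d = d * (q ^ 4 - 1) + qadic4 q d a b c.
  by move: q4_gt0; rewrite /qadic4 !expnS expn0; nia.
have le_rot : qadic4 q d a b c <= q ^ 4 - 1.
  by rewrite -ltnS subn1 prednK // qadic4_lt_expn4.
rewrite modnMDl modn_small // ltn_neqAle le_rot andbT -qadic4_max //.
have lt_q1 : q.-1 < q by rewrite prednK.
(* only the expansion with all digits [q.-1] reaches [q^4 - 1] *)
apply: contraTneq lt_xn => /eqP; rewrite eqn_qadic4 //.
by case/and4P=> /eqP-> /eqP-> /eqP-> /eqP->; rewrite qadic4_max // ltnn.
Qed.

End Qadic.

Theorem mainTheorem11 (q x y a0 a1 a2 a3 : nat) :
  prime_power q ->
  let n := q ^ 4 - 1 in
  x < n ->
  (* I_x = {x, y} has cardinality 2 *)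
  y = (q ^ 2 * x) %% n ->
  size (cyc_coset n q x) = 2 ->
  (* x is the minimal representative of I_x *)
  (forall z, z \in cyc_coset n q x -> x <= z) ->
  (* q-adic expansion x = (a0,a1,a2,a3) *)
  a0 < q -> a1 < q -> a2 < q -> a3 < q ->
  x = a0 + a1 * q + a2 * q ^ 2 + a3 * q ^ 3 ->
  (((q * y) %% n < (q * x) %% n) <-> (a0 < a2 \/ (a2 = a0 /\ a3 < a1))) /\
  (((q * x) %% n < (q * y) %% n) <-> (a2 < a0 \/ (a2 = a0 /\ a1 < a3))).
Proof.
move=> _ n lt_xn def_y _ _ lt_a0q lt_a1q lt_a2q lt_a3q def_x.
have x_digits : x = qadic4 q a0 a1 a2 a3.
  by rewrite def_x /qadic4 !expnS expn0; nia.
have n_gt0 : 0 < n := leq_ltn_trans (leq0n x) lt_xn.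
have lt_yn : y < n by rewrite def_y ltn_pmod.
have qx : (q * x) %% n = qadic4 q a3 a0 a1 a2 by rewrite x_digits mulq_qadic4_mod // -x_digits.
have y_digits : y = qadic4 q a2 a3 a0 a1.
  by rewrite def_y expnS expn1 -mulnA -modnMmr qx mulq_qadic4_mod // -qx ltn_pmod.
have qy : (q * y) %% n = qadic4 q a1 a2 a3 a0 by rewrite y_digits mulq_qadic4_mod // -y_digits.
by rewrite qx qy !ltn_qadic4_swap_halves //; clear -a0 a1 a2 a3; lia.
Qed.
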